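(* Let $n\ge3$, $m_1,\dots,m_n>0$, $M=\mathrm{diag}(m_1,\dots,m_n)$, $\omega\in\mathbb R$, and let $\varphi_1,\dots,\varphi_n$ be longitudes of a fixed-point configuration on the equator. Let $H,G$ be the $n\times n$ symmetric matrices with entries (for $i\ne j$) $H_{ij}=\frac{m_im_j}{\sin^3d_{ij}}$, $H_{ii}=-\sum_{j\neq i}H_{ij}\cos d_{ij}$, $G_{ij}=\frac{-2m_im_j\cos d_{ij}}{\sin^3 d_{ij}}$, $G_{ii}=-\sum_{j\neq i}G_{ij}$, let $H_\omega=H-\omega^2M$, and let $$L=\begin{bmatrix}0&0&M^{-1}&0\\0&0&0&M^{-1}\\H_\omega&0&0&0\\0&G&0&0\end{bmatrix}\in\mathbb C^{4n\times4n}.$$ Then $H_\omega M^{-1}$ and $GM^{-1}$ are diagonalizable. If $u\in\mathbb C^n$ is an eigenvector of $H_\omega M^{-1}$ (respectively of $GM^{-1}$) with eigenvalue $\lambda\neq0$, then there is a two-dimensional $L$-invariant subspace of $\mathbb C^{4n}$ on which, in a suitable basis, $L$ is $\begin{bmatrix}\sqrt\lambda&0\\0&-\sqrt\lambda\end{bmatrix}$. If $u$ is an eigenvector of $H_\omega M^{-1}$ (respectively of $GM^{-1}$) with eigenvalue $0$, then there is a two-dimensional $L$-invariant subspace of $\mathbb C^{4n}$ on which, in a suitable basis, $L$ is $\begin{bmatrix}0&1\\0&0\end{bmatrix}$.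
   Context: Masses lie on the equator of the unit sphere at longitudes $\varphi_i$, with geodesic distances $d_{ij}\in(0,\pi)$ for $i\ne j$. The force function is $V=\sum_{i<j}m_im_j\cot d_{ij}$ and a fixed point is a critical point of $V$ on the configuration space $\{d_{ij}\notin\{0,\pi\}\}\subset(\mathbb S^2)^n$. Here $\sqrt\lambda$ denotes any complex square root of $\lambda$. *)

From HB Require Import structures.
From mathcomp Require Import all_boot all_order all_algebra.
From mathcomp Require Import all_classical all_reals.
From mathcomp Require Import topology normedtype derive realfun trigo.
From mathcomp Require Import complex.
Set Implicit Arguments. Unset Strict Implicit. Unset Printing Implicit Defensive.
Import Order.TTheory GRing.Theory Num.Theory.
Import numFieldNormedType.Exports.
Local Open Scope ring_scope.
Local Open Scope complex_scope.

Section Defs.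
Variables (R : realType) (n : nat).

Definition cot (x : R) : R := cos x / sin x.

(* Points on the unit sphere in longitude/latitude coordinates
   q_i = (cos th_i cos phi_i, cos th_i sin phi_i, sin th_i);
   cosine of the geodesic distance between q_i and q_j. *)
Definition sph_cos (phi th : 'I_n -> R) (i j : 'I_n) : R :=
  cos (th i) * cos (th j) * cos (phi i - phi j) + sin (th i) * sin (th j).

Definition sph_dist (phi th : 'I_n -> R) (i j : 'I_n) : R :=
  acos (sph_cos phi th i j).

Definition equator : 'I_n -> R := fun _ => 0.

Definition eq_dist (phi : 'I_n -> R) (i j : 'I_n) : R := sph_dist phi equator i j.

Definition forceV (m : 'I_n -> R) (phi th : 'I_n -> R) : R :=
  \sum_(i < n) \sum_(j < n | (i < j)%N) m i * m j * cot (sph_dist phi th i j).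

Definition shift (f : 'I_n -> R) (k : 'I_n) (t : R) : 'I_n -> R :=
  fun i => if i == k then f i + t else f i.

Definition in_config_space (phi : 'I_n -> R) : Prop :=
  forall i j : 'I_n, i != j -> eq_dist phi i j != 0 /\ eq_dist phi i j != pi.

(* fixed point: critical point of V on the configuration space of (S^2)^n,
   expressed in the (longitude, latitude) chart around the equatorial
   configuration: all partial derivatives of V vanish. *)
Definition fixed_point (m : 'I_n -> R) (phi : 'I_n -> R) : Prop :=
  in_config_space phi /\
  forall k : 'I_n,
    is_derive (0 : R) (1 : R) (fun t => forceV m (shift phi k t) equator) 0 /\
    is_derive (0 : R) (1 : R) (fun t => forceV m phi (shift equator k t)) 0.

Definition Hmat (m phi : 'I_n -> R) : 'M[R]_n :=
  \matrix_(i, j)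
    if i == j then
      - \sum_(k < n | k != i)
          (m i * m k / sin (eq_dist phi i k) ^+ 3) * cos (eq_dist phi i k)
    else m i * m j / sin (eq_dist phi i j) ^+ 3.

Definition Gmat (m phi : 'I_n -> R) : 'M[R]_n :=
  \matrix_(i, j)
    if i == j then
      - \sum_(k < n | k != i)
          (- 2 * m i * m k * cos (eq_dist phi i k) / sin (eq_dist phi i k) ^+ 3)
    else - 2 * m i * m j * cos (eq_dist phi i j) / sin (eq_dist phi i j) ^+ 3.

Definition Mmat (m : 'I_n -> R) : 'M[R]_n := diag_mx (\row_i m i).

Definition Homega (m phi : 'I_n -> R) (omega : R) : 'M[R]_n :=
  Hmat m phi - omega ^+ 2 *: Mmat m.

Definition cmx (p q : nat) (A : 'M[R]_(p, q)) : 'M[R[i]]_(p, q) :=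
  map_mx (fun x => x%:C) A.

Definition MinvC (m : 'I_n -> R) : 'M[R[i]]_n := invmx (cmx (Mmat m)).

Definition Lmat (m phi : 'I_n -> R) (omega : R) : 'M[R[i]]_((n + n) + (n + n)) :=
  block_mx 0 (block_mx (MinvC m) 0 0 (MinvC m))
           (block_mx (cmx (Homega m phi omega)) 0 0 (cmx (Gmat m phi))) 0.

End Defs.

Definition diag_pm (R : realType) (s : R[i]) : 'M[R[i]]_2 :=
  \matrix_(i < 2, j < 2)
    if i == j then (if i == 0 then s else - s) else 0.

Definition jordan0 (R : realType) : 'M[R[i]]_2 :=
  \matrix_(i < 2, j < 2) if (val i == 0%N) && (val j == 1%N) then 1 else 0.

(* M is a positive diagonal matrix, so with D = M^(1/2) the matrices H_omega M^-1
   and G M^-1 are similar to the real symmetric matrices D^-1 H_omega D^-1 and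
   D^-1 G D^-1, hence diagonalizable by the spectral theorem.
   Writing C^(4n) as (x, y, p, q), L never mixes (x, p) with (y, q): on them it
   acts as [[0, M^-1], [H_omega, 0]] and [[0, M^-1], [G, 0]] respectively.  If
   Y M^-1 u = lambda u for one of these Y and x = M^-1 u, then for s^2 = lambda
   the vectors (x, s u) and (x, -s u) are eigenvectors for s and -s, independent
   when s != 0; when lambda = 0, (0, u) is mapped to (x, 0), which is mapped to 0. *)
From HB Require Import structures.
From mathcomp Require Import all_boot all_order all_algebra.
From mathcomp Require Import all_classical all_reals.
From mathcomp Require Import topology normedtype derive realfun trigo.
From mathcomp Require Import complex.
Set Implicit Arguments. Unset Strict Implicit. Unset Printing Implicit Defensive.
Import Order.TTheory GRing.Theory Num.Theory.
Local Open Scope ring_scope.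
Local Open Scope complex_scope.

Lemma diagonalizable_conjmx (F : fieldType) n (V A : 'M[F]_n) :
  V \in unitmx -> diagonalizable A -> diagonalizable (conjmx V A).
Proof.
move=> Vu [P Pu PA]; exists (P *m invmx V); first by rewrite unitmx_mul Pu unitmx_inv.
by rewrite /similar_to conjuMumx ?unitmx_inv // conjmxK.
Qed.

Lemma diagonalizable_realsym (C : numClosedFieldType) n (A : 'M[C]_n) :
  A \is symmetricmx -> A \is a realmx -> diagonalizable A.
Proof.
move=> Asym Areal; have /orthomx_spectralP -> := symmetric_normalmx Asym Areal.
have Pu := spectral_unit A.
rewrite -conjVmx //; apply: diagonalizable_conjmx; last exact: diagonalizable_diag.
by rewrite unitmx_inv.
Qed.

Lemma unitmx_diag (F : fieldType) n (d : 'rV[F]_n) :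
  (forall i, d 0 i != 0) -> diag_mx d \in unitmx.
Proof. by move=> d_neq0; rewrite unitmxE det_diag unitfE; apply/prodf_neq0 => i _. Qed.

Lemma invmx_diag (F : fieldType) n (d : 'rV[F]_n) :
  (forall i, d 0 i != 0) -> invmx (diag_mx d) = diag_mx (\row_i (d 0 i)^-1).
Proof.
move=> d_neq0; have dd : diag_mx d *m diag_mx (\row_i (d 0 i)^-1) = 1%:M.
  by rewrite mulmx_diag -diag_const_mx; congr diag_mx; apply/rowP => i; rewrite !mxE divff.
by rewrite -[invmx _]mulmx1 -dd mulmxA mulVmx ?unitmx_diag // mul1mx.
Qed.

Section Complexification.
Variable R : realType.

Lemma cmxE p q (A : 'M[R]_(p, q)) : cmx A = map_mx (real_complex R) A.
Proof. by []. Qed.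

Lemma cmx_real p q (A : 'M[R]_(p, q)) : cmx A \is a realmx.
Proof. by apply/mxOverP => i j; rewrite mxE complex_real. Qed.

Lemma cmx_symmetric n (A : 'M[R]_n) : A^T = A -> cmx A \is symmetricmx.
Proof.
by move=> At; apply/is_hermitianmxP; rewrite expr0 scale1r map_mx_id // map_trmx At.
Qed.

(* With D = diag (sqrt m_i) and E = D^-1, S M^-1 = D (E S E) D^-1. *)
Lemma diagonalizable_sym_mul_Minv n (S : 'M[R]_n) (m : 'I_n -> R) :
  S^T = S -> (forall i, 0 < m i) -> diagonalizable (cmx S *m MinvC m).
Proof.
move=> St m_pos.
pose D := diag_mx (\row_i Num.sqrt (m i)).
pose E := diag_mx (\row_i (Num.sqrt (m i))^-1).
have sqrt_neq0 i : Num.sqrt (m i) != 0 by rewrite gt_eqF // sqrtr_gt0.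
have invD : invmx D = E.
  rewrite invmx_diag => [|i]; last by rewrite mxE.
  by congr diag_mx; apply/rowP => i; rewrite !mxE.
have invM : invmx (Mmat m) = E *m E.
  rewrite invmx_diag => [|i]; last by rewrite mxE gt_eqF.
  rewrite mulmx_diag; congr diag_mx; apply/rowP => i.
  by rewrite !mxE -invfM -expr2 sqr_sqrtr // ltW.
have Du : D \in unitmx by apply: unitmx_diag => i; rewrite mxE.
have -> : cmx S *m MinvC m = conjmx (cmx D) (cmx (E *m S *m E)).
  rewrite conjumx ?cmxE ?map_unitmx // /MinvC -!map_invmx invD invM -!map_mxM.
  by congr map_mx; rewrite !mulmxA -invD mulmxV // mul1mx.
apply: diagonalizable_conjmx; first by rewrite cmxE map_unitmx.
apply: diagonalizable_realsym; last exact: cmx_real.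
by apply: cmx_symmetric; rewrite !trmx_mul St tr_diag_mx mulmxA.
Qed.
End Complexification.

Definition has_invariant_plane {F : fieldType} {N} (A : 'M[F]_N) (J : 'M[F]_2) :=
  exists P : 'M[F]_(N, 2), \rank P = 2%N /\ A *m P = P *m J.

Lemma mxrank_row_mx2 (F : fieldType) N (v w : 'cV[F]_N) :
  (forall a b : F, a *: v + b *: w = 0 -> a = 0 /\ b = 0) ->
  \rank (row_mx v w) = 2%N.
Proof.
move=> vw_free; rewrite -mxrank_tr tr_row_mx; apply/eqP; apply: inj_row_free => u.
rewrite -[u]hsubmxK mul_row_col (mx11_scalar (lsubmx u)) (mx11_scalar (rsubmx u)).
rewrite !mul_scalar_mx -!linearZ -linearD /= => /(congr1 trmx).
by rewrite trmxK trmx0 => /vw_free [-> ->]; rewrite !raddf0 row_mx0.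
Qed.

Lemma mx2_block (F : pzRingType) (J : 'M[F]_2) :
  J = block_mx (J 0 0)%:M (J 0 1)%:M (J 1 0)%:M (J 1 1)%:M :> 'M_(1 + 1).
Proof.
apply/matrixP => -[[|[|//]] ?] -[[|[|//]] ?]; rewrite !mxE /=.
all: case: splitP => k /= Hk; rewrite !mxE; case: splitP => l /= Hl; rewrite !mxE.
all: move: Hk Hl; rewrite (ord1 k) (ord1 l) //= => _ _.
all: by rewrite mulr1n; congr (J _ _); apply: val_inj.
Qed.

Lemma mul_row_mx2 (F : comPzRingType) N (v w : 'cV[F]_N) (J : 'M[F]_2) :
  row_mx v w *m J = row_mx (J 0 0 *: v + J 1 0 *: w) (J 0 1 *: v + J 1 1 *: w).
Proof. by rewrite {1}[J]mx2_block (@mul_row_block _ N 1 1 1 1 v w) !mul_mx_scalar. Qed.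

Lemma has_invariant_plane_lift (F : fieldType) N' N (A' : 'M[F]_N') (A : 'M_N)
    (E : 'M_(N', N)) (E' : 'M_(N, N')) J :
  E' *m E = 1%:M -> A' *m E = E *m A ->
  has_invariant_plane A J -> has_invariant_plane A' J.
Proof.
move=> E'E A'E [P [rankP AP]]; exists (E *m P); split.
  have : (\rank P <= \rank (E *m P))%N by rewrite -{1}[P]mul1mx -E'E -mulmxA mxrankM_maxr.
  by rewrite rankP => rank_ge; apply/eqP; rewrite eqn_leq rank_leq_col.
by rewrite mulmxA A'E -mulmxA AP mulmxA.
Qed.

Section InvariantPlanes.
Variables (R : realType) (N : nat).
Implicit Types (A : 'M[R[i]]_N) (v w : 'cV[R[i]]_N).

Lemma mul_diag_pm v w s : row_mx v w *m diag_pm s = row_mx (s *: v) (- s *: w).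
Proof. by rewrite mul_row_mx2 !mxE /= !scale0r addr0 add0r. Qed.

Lemma mul_jordan0 v w : row_mx v w *m jordan0 R = row_mx (0 : 'cV_N) v.
Proof. by rewrite mul_row_mx2 !mxE /= !scale0r scale1r !addr0. Qed.

Lemma eigen_pair_plane A v w s :
  v != 0 -> w != 0 -> s != 0 -> A *m v = s *: v -> A *m w = - s *: w ->
  has_invariant_plane A (diag_pm s).
Proof.
move=> v_neq0 w_neq0 s_neq0 Av Aw; exists (row_mx v w).
split; last by rewrite (mul_mx_row A v w) Av Aw mul_diag_pm.
apply: mxrank_row_mx2 => a b vw0.
have bw : b *: w = - (a *: v) by apply/eqP; rewrite -addr_eq0 addrC vw0.
(* applying A to a v + b w = 0 and substituting b w = - a v leaves 2 s a v = 0 *)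
have := congr1 (mulmx A) vw0; rewrite mulmx0 mulmxDr -!scalemxAr Av Aw.
rewrite !scalerA mulrC [b * _]mulrC -!scalerA bw scaleNr scalerN opprK -scalerDl.
move/eqP; rewrite !scaler_eq0 -mulr2n mulrn_eq0 (negPf s_neq0) (negPf v_neq0) /= orbF.
move=> /eqP a0; move: bw; rewrite a0 scale0r oppr0 => /eqP.
by rewrite scaler_eq0 (negPf w_neq0) orbF => /eqP.
Qed.

Lemma jordan_chain_plane A v w :
  v != 0 -> A *m v = 0 -> A *m w = v -> has_invariant_plane A (jordan0 R).
Proof.
move=> v_neq0 Av Aw; exists (row_mx v w).
split; last by rewrite (mul_mx_row A v w) Av Aw mul_jordan0.
apply: mxrank_row_mx2 => a b vw0.
have := congr1 (mulmx A) vw0; rewrite mulmx0 => /eqP.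
rewrite mulmxDr -!scalemxAr Av Aw scaler0 add0r scaler_eq0 (negPf v_neq0) orbF => /eqP b0.
move: vw0; rewrite b0 scale0r addr0 => /eqP.
by rewrite scaler_eq0 (negPf v_neq0) orbF => /eqP.
Qed.
End InvariantPlanes.

Section HamiltonianBlocks.
Variables (R : realType) (k : nat) (Mi Y : 'M[R[i]]_k).
Hypothesis Mi_unit : Mi \in unitmx.

Lemma mul_antidiag_col (x p : 'cV_k) :
  block_mx 0 Mi Y 0 *m col_mx x p = col_mx (Mi *m p) (Y *m x).
Proof. by rewrite mul_block_col !mul0mx addr0 add0r. Qed.

Lemma eigenvector_planes (u : 'cV_k) lam : u != 0 -> Y *m Mi *m u = lam *: u ->
  (lam != 0 -> forall s, s ^+ 2 = lam ->
     has_invariant_plane (block_mx 0 Mi Y 0) (diag_pm s)) /\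
  (lam = 0 -> has_invariant_plane (block_mx 0 Mi Y 0) (jordan0 R)).
Proof.
move=> u_neq0 Yu; set x := Mi *m u.
have x_neq0 : x != 0.
  by apply: contraNneq u_neq0 => x0; rewrite -(mulKmx Mi_unit u) -/x x0 mulmx0.
have col_neq0 (p : 'cV_k) : col_mx x p != 0 by rewrite col_mx_eq0 negb_and x_neq0.
split=> [lam_neq0 s s2 | lam0].
  have eigen t : t ^+ 2 = lam ->
      block_mx 0 Mi Y 0 *m col_mx x (t *: u) = t *: col_mx x (t *: u).
    move=> t2; rewrite mul_antidiag_col -scalemxAr /x mulmxA Yu.
    by rewrite scale_col_mx scalerA -expr2 t2.
  have s_neq0 : s != 0 by apply: contraNneq lam_neq0 => s0; rewrite -s2 s0 expr0n.
  apply: eigen_pair_plane (col_neq0 _) (col_neq0 _) s_neq0 (eigen _ s2) (eigen _ _).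
  by rewrite sqrrN.
apply: (jordan_chain_plane (w := col_mx 0 u) (col_neq0 0)).
  by rewrite mul_antidiag_col mulmx0 /x mulmxA Yu lam0 scale0r col_mx0.
by rewrite mul_antidiag_col mulmx0.
Qed.
End HamiltonianBlocks.

Section Decoupling.
Variables (F : fieldType) (k : nat).

Lemma antidiag_mul_block_diag p (B1 B2 : 'M[F]_p) (S : 'M_(p, k)) (Mi Y : 'M_k) :
  B1 *m S = S *m Mi -> B2 *m S = S *m Y ->
  block_mx 0 B1 B2 0 *m block_mx S 0 0 S = block_mx S 0 0 S *m block_mx 0 Mi Y 0.
Proof. by move=> B1S B2S; rewrite !mulmx_block !mul0mx !mulmx0 !addr0 !add0r B1S B2S. Qed.

Lemma block_diag_isometry p (S : 'M[F]_(p, k)) :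
  S^T *m S = 1%:M -> (block_mx S 0 0 S)^T *m block_mx S 0 0 S = 1%:M.
Proof.
move=> StS; rewrite tr_block_mx !trmx0 mulmx_block !mul0mx !mulmx0 !addr0 !add0r StS.
by rewrite -scalar_mx_block.
Qed.

Variables (Mi H G : 'M[F]_k).
Local Notation L := (block_mx 0 (block_mx Mi 0 0 Mi) (block_mx H 0 0 G) 0).

Lemma invariant_plane_lift_left J :
  has_invariant_plane (block_mx 0 Mi H 0) J -> has_invariant_plane L J.
Proof.
pose S : 'M[F]_(k + k, k) := col_mx 1%:M 0.
apply: (has_invariant_plane_lift (E := block_mx S 0 0 S) (block_diag_isometry _)).
  by rewrite tr_col_mx trmx1 trmx0 mul_row_col mul1mx mul0mx addr0.
apply: antidiag_mul_block_diag;
  by rewrite /S mul_block_col mul_col_mx !mulmx1 !mul1mx !mul0mx !mulmx0 !addr0 ?add0r.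
Qed.

Lemma invariant_plane_lift_right J :
  has_invariant_plane (block_mx 0 Mi G 0) J -> has_invariant_plane L J.
Proof.
pose S : 'M[F]_(k + k, k) := col_mx 0 1%:M.
apply: (has_invariant_plane_lift (E := block_mx S 0 0 S) (block_diag_isometry _)).
  by rewrite tr_col_mx trmx1 trmx0 mul_row_col mul1mx mul0mx add0r.
apply: antidiag_mul_block_diag;
  by rewrite /S mul_block_col mul_col_mx !mulmx1 !mul1mx !mul0mx !mulmx0 !addr0 ?add0r.
Qed.
End Decoupling.

Section EquatorialMatrices.
Variables (R : realType) (n : nat) (m phi : 'I_n -> R).

Lemma eq_dist_sym i j : eq_dist phi i j = eq_dist phi j i.
Proof. by rewrite /eq_dist /sph_dist /sph_cos -[phi j - phi i]opprB cosN. Qed.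

Lemma Hmat_sym : (Hmat m phi)^T = Hmat m phi.
Proof.
apply/matrixP => i j; rewrite !mxE eq_sym; case: eqP => [-> // | _].
by rewrite eq_dist_sym (mulrC (m j)).
Qed.

Lemma Gmat_sym : (Gmat m phi)^T = Gmat m phi.
Proof.
apply/matrixP => i j; rewrite !mxE eq_sym; case: eqP => [-> // | _].
by rewrite eq_dist_sym [- 2 * m j * m i]mulrAC.
Qed.

Lemma Homega_sym omega : (Homega m phi omega)^T = Homega m phi omega.
Proof. by rewrite /Homega linearB linearZ /= Hmat_sym tr_diag_mx. Qed.

Lemma MinvC_unit : (forall i, 0 < m i) -> MinvC m \in unitmx.
Proof.
by move=> m_pos; rewrite unitmx_inv cmxE map_unitmx unitmx_diag // => i; rewrite mxE gt_eqF.
Qed.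
End EquatorialMatrices.

Theorem lemma2 (R : realType) (n : nat) (m : 'I_n -> R) (omega : R)
    (phi : 'I_n -> R) :
  (3 <= n)%N ->
  (forall i, 0 < m i) ->
  fixed_point m phi ->
  let A := cmx (Homega m phi omega) *m MinvC m in
  let B := cmx (Gmat m phi) *m MinvC m in
  let L := Lmat m phi omega in
  diagonalizable A /\ diagonalizable B /\
  forall (X : 'M[R[i]]_n), (X = A \/ X = B) ->
  forall (u : 'cV[R[i]]_n) (lambda : R[i]),
    u != 0 -> X *m u = lambda *: u ->
    (lambda != 0 -> forall s : R[i], s ^+ 2 = lambda ->
       exists P : 'M[R[i]]_((n + n) + (n + n), 2),
         \rank P = 2%N /\ L *m P = P *m diag_pm s) /\
    (lambda = 0 ->
       exists P : 'M[R[i]]_((n + n) + (n + n), 2),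
         \rank P = 2%N /\ L *m P = P *m jordan0 R).
Proof.
move=> _ m_pos _ A B L.
split; first exact: diagonalizable_sym_mul_Minv (Homega_sym _ _ _) m_pos.
split; first exact: diagonalizable_sym_mul_Minv (Gmat_sym _ _) m_pos.
have Mi_unit := MinvC_unit m_pos.
move=> X [->|->] u lam u_neq0 Xu.
- have [planes_pm planes_J] := eigenvector_planes Mi_unit u_neq0 Xu.
  by split=> [? s ?|?]; apply: invariant_plane_lift_left; [apply: planes_pm | apply: planes_J].
- have [planes_pm planes_J] := eigenvector_planes Mi_unit u_neq0 Xu.
  by split=> [? s ?|?]; apply: invariant_plane_lift_right; [apply: planes_pm | apply: planes_J].
Qed.
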